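(* Let $\mu$ be the uniform probability measure on $\{-1,1\}^n$. There exists a universal constant $\kappa>0$ (independent of $n$) such that for every $V\subset\mathbb{R}^n$, $$\log\int \exp\Big(\sup_{\xi\in V}\{\langle\xi,x\rangle-\Lambda_\mu(\xi)\}\Big)\,d\mu(x)\le\kappa\, b(V).$$
   Context: $\Lambda_\mu(\xi)=\log\int e^{\langle\xi,x\rangle}d\mu(x)$ is the logarithmic Laplace transform (here $\Lambda_\mu(\xi)=\sum_i\log\cosh\xi_i$). $b(V)=\mathbb{E}\sup_{\xi\in V}\langle\xi,\varepsilon\rangle$ with $\varepsilon$ uniformly distributed on $\{-1,1\}^n$ (Rademacher mean-width). *)

From HB Require Import structures.
From mathcomp Require Import all_boot all_order all_algebra.
From mathcomp Require Import all_classical all_reals all_analysis.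
Set Implicit Arguments. Unset Strict Implicit. Unset Printing Implicit Defensive.
Import Order.TTheory GRing.Theory Num.Theory.
Local Open Scope ring_scope.
Local Open Scope classical_set_scope.

Definition cube_pt {R : realType} {n : nat} (b : {ffun 'I_n -> bool}) : 'I_n -> R :=
  fun i => if b i then 1 else -1.

Definition dotv {R : realType} {n : nat} (u v : 'I_n -> R) : R :=
  \sum_(i < n) u i * v i.

Definition cube_int {R : realType} {n : nat} (f : ('I_n -> R) -> R) : R :=
  (2 ^+ n)^-1 * \sum_(b : {ffun 'I_n -> bool}) f (cube_pt b).

Definition cube_inte {R : realType} {n : nat} (f : ('I_n -> R) -> \bar R) : \bar R :=
  (((2 ^+ n)^-1 : R)%:E * \sum_(b : {ffun 'I_n -> bool}) f (cube_pt b))%E.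

Definition Lambda_mu {R : realType} {n : nat} (xi : 'I_n -> R) : R :=
  ln (cube_int (fun x => expR (dotv xi x))).

Definition rad_width {R : realType} {n : nat} (V : set ('I_n -> R)) : \bar R :=
  cube_inte (fun eps => ereal_sup [set (dotv xi eps)%:E | xi in V]).

Definition lhs_P24 {R : realType} {n : nat} (V : set ('I_n -> R)) : \bar R :=
  lne (cube_inte (fun x =>
    expeR (ereal_sup [set (dotv xi x - Lambda_mu xi)%:E | xi in V]))).

From mathcomp Require Import all_boot all_order all_algebra.
From mathcomp Require Import all_classical all_reals all_analysis.
From mathcomp Require Import ring lra.
Import Order.TTheory GRing.Theory Num.Theory.
Set Implicit Arguments. Unset Strict Implicit. Unset Printing Implicit Defensive.
Local Open Scope ring_scope.
Local Open Scope classical_set_scope.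

(* Lambda_mu xi = sum_i lncosh xi_i, and the convex conjugate of
   lncosh is the relative entropy h(u) of the {-1, 1}-law with mean u.  By
   Fenchel-Young, for every u in [-1, 1]^n and every vertex x,
     <xi, x> - Lambda_mu xi <= <xi, x - u> + sum_i h(u_i)
                            = 2 E_{K_u(x, .)} <xi, y> + sum_i h(u_i),
   where K_u(x, .) is the product law on the cube with means (x - u) / 2.
   Taking sup over xi in V bounds the integrand by 2 E_{K_u(x, .)} S + sum h(u)
   with S(y) = sup_{xi in V} <xi, y>.  Any f with such bounds for all u
   satisfies log E e^f <= 2 E S: by induction on n, choosing u_1 as tanh of
   half the gap between the two conditional means of S in the first
   coordinate, which is the equality case of Fenchel-Young.  So kappa = 2. *)

Section SignEntropy.
Variable R : realType.
Implicit Types (p q u x : R) (s t : bool).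

Definition pm s : R := if s then 1 else -1.

Definition lncosh x : R := ln ((expR x + expR (- x)) / 2).

Definition tanhr x : R := (expR x - expR (- x)) / (expR x + expR (- x)).

(* Relative entropy, with respect to the uniform law, of the law on {-1, 1}
   with mean [u]; it is the convex conjugate of [lncosh]. *)
Definition sign_relent u : R :=
  (1 + u) / 2 * ln ((1 + u) / 2) + (1 - u) / 2 * ln ((1 - u) / 2) + ln 2.

Lemma gibbs_ineq p q : 0 <= p -> 0 < q -> p * ln q - p * ln p <= q - p.
Proof.
move=> p_ge0 q_gt0.
have [->|p_neq0] := eqVneq p 0; first by rewrite !mul0r subrr subr0 ltW.
have p_gt0 : 0 < p by rewrite lt_def p_neq0.
have : ln (q / p) <= q / p - 1.
  have qp_gt0 : 0 < q / p by rewrite divr_gt0.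
  by have := @le_ln1Dx R (q / p - 1); rewrite addrCA subrr addr0; apply; lra.
rewrite ln_div ?posrE // -(ler_pM2l p_gt0) mulrBr mulrBr mulr1 mulrCA divff ?gt_eqF //.
by rewrite mulr1.
Qed.

Lemma expR_pm_gt0 x : 0 < expR x + expR (- x).
Proof. by rewrite addr_gt0 ?expR_gt0. Qed.

Lemma lncosh_ge x u : -1 <= u <= 1 -> x * u - sign_relent u <= lncosh x.
Proof.
move=> /andP[u_geN1 u_le1].
set Z := expR x + expR (- x); have Z_gt0 : 0 < Z := expR_pm_gt0 x.
have lnE v : ln (expR v / Z) = v - ln Z by rewrite ln_div ?posrE ?expR_gt0 // expRK.
(* Gibbs' inequality against the tilted law (e^x, e^-x) / Z. *)
have G1 := @gibbs_ineq ((1 + u) / 2) (expR x / Z) ltac:(lra) (divr_gt0 (expR_gt0 _) Z_gt0).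
have G2 := @gibbs_ineq ((1 - u) / 2) (expR (- x) / Z) ltac:(lra) (divr_gt0 (expR_gt0 _) Z_gt0).
have qsum : expR x / Z + expR (- x) / Z = 1 by rewrite -mulrDl divff ?gt_eqF.
rewrite !lnE in G1 G2; rewrite /lncosh ln_div ?posrE // /sign_relent.
move: G1 G2; set a := ln ((1 + u) / 2); set b := ln ((1 - u) / 2); set L := ln Z.
have -> : x * u - ((1 + u) / 2 * a + (1 - u) / 2 * b + ln 2) =
  ((1 + u) / 2 * (x - L) - (1 + u) / 2 * a) + ((1 - u) / 2 * (- x - L) - (1 - u) / 2 * b)
  + L - ln 2 by field.
lra.
Qed.

Lemma tanhr_itv x : -1 <= tanhr x <= 1.
Proof.
have Z_gt0 := expR_pm_gt0 x; have := expR_gt0 x; have := expR_gt0 (- x).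
move=> ? ?; rewrite /tanhr; apply/andP; split.
  by rewrite ler_pdivlMr //; lra.
by rewrite ler_pdivrMr //; lra.
Qed.

Lemma lncosh_tanhr x : x * tanhr x - sign_relent (tanhr x) = lncosh x.
Proof.
set Z := expR x + expR (- x); have Z_gt0 : 0 < Z := expR_pm_gt0 x.
have lnE v : ln (expR v / Z) = v - ln Z by rewrite ln_div ?posrE ?expR_gt0 // expRK.
have p1 : (1 + tanhr x) / 2 = expR x / Z by rewrite /tanhr /Z; field; rewrite gt_eqF.
have p2 : (1 - tanhr x) / 2 = expR (- x) / Z by rewrite /tanhr /Z; field; rewrite gt_eqF.
rewrite /sign_relent p1 p2 !lnE /lncosh ln_div ?posrE // -/Z.
have -> : tanhr x = expR x / Z - expR (- x) / Z by rewrite /tanhr mulrBl.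
by rewrite /Z; field; rewrite -/Z gt_eqF.
Qed.

(* The conditional law, given the sign [s], of a {-1, 1}-valued variable with
   mean [(pm s - u) / 2]. *)
Definition sign_kernel u s t : R := (1 + pm t * (pm s - u) / 2) / 2.

Lemma sign_kernel_ge0 u s t : -1 <= u <= 1 -> 0 <= sign_kernel u s t.
Proof. by move=> /andP[? ?]; rewrite /sign_kernel; case: s; case: t => /=; lra. Qed.

Lemma sum_sign_kernel u s : \sum_t sign_kernel u s t = 1.
Proof. by rewrite big_bool /sign_kernel /=; field. Qed.

Lemma sign_kernel_mean u s : \sum_t sign_kernel u s t * pm t = (pm s - u) / 2.
Proof. by rewrite big_bool /sign_kernel /=; field. Qed.

(* The one-dimensional case of [cube_expR_le] below, with equality for
   [u = tanhr ((T true - T false) / 2)]. *)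
Lemma sign_kernel_expR (T : bool -> R) : exists2 u, -1 <= u <= 1 &
  expR (sign_relent u) * \sum_s expR (2 * \sum_t sign_kernel u s t * T t)
  = 2 * expR (\sum_t T t).
Proof.
set d := (T true - T false) / 2; set u := tanhr d; exists u; first exact: tanhr_itv.
set c := (expR d + expR (- d)) / 2.
have c_gt0 : 0 < c by rewrite divr_gt0 ?expR_pm_gt0.
have relentE : sign_relent u = d * u - ln c.
  by rewrite -[RHS]/(d * u - lncosh d) -(lncosh_tanhr d) -/u; ring.
have termE s : expR (sign_relent u) * expR (2 * \sum_t sign_kernel u s t * T t)
    = expR (\sum_t T t) * expR (pm s * d) / c.
  rewrite -expRD relentE -[c]lnK ?posrE // expRK -expRD -expRB; congr expR.
  by rewrite !big_bool /sign_kernel /d /=; field.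
rewrite mulr_sumr big_bool !termE /= mul1r mulN1r.
by rewrite /c; field; rewrite gt_eqF ?expR_pm_gt0.
Qed.

End SignEntropy.
Arguments pm {R} s.

Definition ord_cons {T : Type} {n} (a : T) (v : 'I_n -> T) : 'I_n.+1 -> T :=
  fun i => if unlift ord0 i is Some j then v j else a.

Lemma ord_cons0 T n (a : T) (v : 'I_n -> T) : ord_cons a v ord0 = a.
Proof. by rewrite /ord_cons unlift_none. Qed.

Lemma ord_consS T n (a : T) (v : 'I_n -> T) j : ord_cons a v (lift ord0 j) = v j.
Proof. by rewrite /ord_cons liftK. Qed.

Local Notation cube n := {ffun 'I_n -> bool}.

Definition cube_cons n (s : bool) (b : cube n) : cube n.+1 := [ffun i => ord_cons s b i].

Lemma sum_cube_cons (V : nmodType) n (G : cube n.+1 -> V) :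
  \sum_b G b = \sum_(s : bool) \sum_(b : cube n) G (cube_cons s b).
Proof.
rewrite pair_big /= (reindex (fun p : bool * cube n => cube_cons p.1 p.2)) //.
exists (fun b : cube n.+1 => (b ord0, [ffun j => b (lift ord0 j)])).
  move=> [s b] _; rewrite /cube_cons /= ffunE ord_cons0; congr pair.
  by apply/ffunP => j; rewrite !ffunE ord_consS.
move=> b _; apply/ffunP => i; rewrite !ffunE /ord_cons.
by case: unliftP => [j ->|->]; rewrite ?ffunE.
Qed.

Section Cube.
Variable R : realType.

Definition cube_kernel n (u : 'I_n -> R) (b c : cube n) : R :=
  \prod_i sign_kernel (u i) (b i) (c i).

Definition cube_relent n (u : 'I_n -> R) : R := \sum_i sign_relent (u i).

Lemma cube_kernel_cons n a (u : 'I_n -> R) s t b c :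
  cube_kernel (ord_cons a u) (cube_cons s b) (cube_cons t c)
  = sign_kernel a s t * cube_kernel u b c.
Proof.
rewrite /cube_kernel big_ord_recl !ffunE !ord_cons0; congr (_ * _).
by apply: eq_bigr => i _; rewrite !ffunE !ord_consS.
Qed.

Lemma cube_relent_cons n a (u : 'I_n -> R) :
  cube_relent (ord_cons a u) = sign_relent a + cube_relent u.
Proof.
rewrite /cube_relent big_ord_recl ord_cons0; congr (_ + _).
by apply: eq_bigr => i _; rewrite ord_consS.
Qed.

Lemma cube_kernel_ge0 n (u : 'I_n -> R) b c :
  (forall i, -1 <= u i <= 1) -> 0 <= cube_kernel u b c.
Proof. by move=> u_itv; apply: prodr_ge0 => i _; apply: sign_kernel_ge0. Qed.

Lemma cube_kernel_mean n (u : 'I_n -> R) b i :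
  \sum_c cube_kernel u b c * cube_pt c i = (cube_pt b i - u i) / 2.
Proof.
pose F j t := sign_kernel (u j) (b j) t * (if j == i then pm t else 1).
have -> : \sum_c cube_kernel u b c * cube_pt c i = \sum_(c : cube n) \prod_j F j (c j).
  by apply: eq_bigr => c _; rewrite /F big_split /= -big_mkcond /= big_pred1_eq.
rewrite -(bigA_distr_bigA F) (bigD1 i) //= [X in _ * X]big1 => [|j /negPf ji].
  by rewrite mulr1 /F eqxx -sign_kernel_mean; apply: eq_bigr.
by under eq_bigr do rewrite /F ji mulr1; exact: sum_sign_kernel.
Qed.

Lemma cube_int_expR_dot n (xi : 'I_n -> R) :
  cube_int (fun x => expR (dotv xi x)) = \prod_i ((expR (xi i) + expR (- xi i)) / 2).
Proof.
rewrite /cube_int /dotv /cube_pt /=.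
under eq_bigr => b _ do rewrite expR_sum.
rewrite -(bigA_distr_bigA (fun i (s : bool) => expR (xi i * (if s then 1 else -1)))) /=.
rewrite -[in X in X^-1 * _](card_ord n) -prodr_const -prodfV -big_split /=.
by apply: eq_bigr => i _; rewrite big_bool /= mulr1 mulrN1 mulrC.
Qed.

Lemma Lambda_muE n (xi : 'I_n -> R) : Lambda_mu xi = \sum_i lncosh (xi i).
Proof.
rewrite /Lambda_mu cube_int_expR_dot (eq_bigr (fun i => expR (lncosh (xi i)))).
  by rewrite -expR_sum expRK.
by move=> i _; rewrite lnK // posrE divr_gt0 ?expR_pm_gt0.
Qed.

Lemma Lambda_mu_ge n (xi u : 'I_n -> R) : (forall i, -1 <= u i <= 1) ->
  \sum_i (xi i * u i - sign_relent (u i)) <= Lambda_mu xi.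
Proof. by move=> u_itv; rewrite Lambda_muE; apply: ler_sum => i _; apply: lncosh_ge. Qed.

Lemma dotv_sub_Lambda_mu_le n (xi u : 'I_n -> R) (S : cube n -> R) b :
  (forall i, -1 <= u i <= 1) -> (forall c, dotv xi (cube_pt c) <= S c) ->
  dotv xi (cube_pt b) - Lambda_mu xi <= 2 * \sum_c cube_kernel u b c * S c + cube_relent u.
Proof.
move=> u_itv S_ge.
have mean : 2 * \sum_c cube_kernel u b c * dotv xi (cube_pt c)
    = dotv xi (cube_pt b) - \sum_i xi i * u i.
  under eq_bigr do rewrite /dotv mulr_sumr.
  rewrite exchange_big /= mulr_sumr /dotv -sumrB; apply: eq_bigr => i _.
  under eq_bigr do rewrite mulrCA.
  by rewrite -mulr_sumr cube_kernel_mean; field.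
have : \sum_c cube_kernel u b c * dotv xi (cube_pt c) <= \sum_c cube_kernel u b c * S c.
  by apply: ler_sum => c _; rewrite ler_wpM2l ?cube_kernel_ge0.
by have := Lambda_mu_ge xi u_itv; rewrite sumrB /cube_relent; lra.
Qed.

Lemma cube_kernel_cons_sum n a (u : 'I_n -> R) s b (S : cube n.+1 -> R) :
  \sum_c cube_kernel (ord_cons a u) (cube_cons s b) c * S c
  = \sum_c cube_kernel u b c * \sum_t sign_kernel a s t * S (cube_cons t c).
Proof.
rewrite sum_cube_cons exchange_big /=; apply: eq_bigr => c _.
by rewrite mulr_sumr; apply: eq_bigr => t _; rewrite cube_kernel_cons mulrCA mulrA.
Qed.

Lemma cube_expR_le n (f S : cube n -> R) :
  (forall b (u : 'I_n -> R), (forall i, -1 <= u i <= 1) ->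
     f b <= 2 * \sum_c cube_kernel u b c * S c + cube_relent u) ->
  \sum_b expR (f b) <= 2 ^+ n * expR (2 * ((2 ^+ n)^-1 * \sum_c S c)).
Proof.
elim: n f S => [|n IH] f S f_le.
  have f_le0 b : f b <= 2 * \sum_c S c.
    have u0_itv : forall i : 'I_0, -1 <= (0 : R) <= 1 by case.
    have := f_le b (fun=> 0) u0_itv.
    rewrite /cube_relent big_ord0 addr0.
    by under eq_bigr do rewrite /cube_kernel big_ord0 mul1r.
  rewrite expr0 invr1 !mul1r.
  apply: (@le_trans _ _ (\sum_(b : cube 0) expR (2 * \sum_c S c))).
    by apply: ler_sum => b _; rewrite ler_expR.
  by rewrite sumr_const card_ffun card_bool card_ord /= mulr1n.
pose T t := (2 ^+ n)^-1 * \sum_c S (cube_cons t c).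
have [a a_itv expR_T] := sign_kernel_expR T.
have IHs s : \sum_b expR (f (cube_cons s b) - sign_relent a)
    <= 2 ^+ n * expR (2 * \sum_t sign_kernel a s t * T t).
  have -> : \sum_t sign_kernel a s t * T t
      = (2 ^+ n)^-1 * \sum_c \sum_t sign_kernel a s t * S (cube_cons t c).
    rewrite exchange_big /= mulr_sumr; apply: eq_bigr => t _.
    by rewrite /T mulrCA -mulr_sumr.
  apply: IH => b u u_itv.
  have consu_itv i : -1 <= ord_cons a u i <= 1 by rewrite /ord_cons; case: unlift.
  have := f_le (cube_cons s b) (ord_cons a u) consu_itv.
  rewrite cube_kernel_cons_sum cube_relent_cons; lra.
have two_gt0 : (0 : R) < 2 ^+ n by rewrite exprn_gt0.
have sumS : \sum_c S c = 2 ^+ n * \sum_t T t.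
  rewrite sum_cube_cons mulr_sumr; apply: eq_bigr => t _.
  by rewrite /T mulrA divff ?gt_eqF ?mul1r.
clearbody T.
have split_f s : \sum_b expR (f (cube_cons s b))
    = expR (sign_relent a) * \sum_b expR (f (cube_cons s b) - sign_relent a).
  by rewrite mulr_sumr; apply: eq_bigr => b _; rewrite -expRD addrC subrK.
rewrite sum_cube_cons.
apply: (@le_trans _ _ (\sum_(s : bool) expR (sign_relent a)
    * (2 ^+ n * expR (2 * \sum_t sign_kernel a s t * T t)))).
  by apply: ler_sum => s _; rewrite split_f ler_pM2l ?expR_gt0.
have -> : 2 * (2 ^- n.+1 * \sum_c S c) = \sum_t T t.
  by rewrite sumS exprS; field; rewrite gt_eqF.
under eq_bigr do rewrite mulrCA.
by rewrite -!mulr_sumr expR_T exprS mulrA [2 ^+ n * 2]mulrC.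
Qed.

End Cube.

Section Width.
Variable R : realType.
Local Open Scope ereal_scope.

Definition support_fun n (V : set ('I_n -> R)) (x : 'I_n -> R) : \bar R :=
  ereal_sup [set (dotv xi x)%:E | xi in V].

Definition legendre_on n (V : set ('I_n -> R)) (x : 'I_n -> R) : \bar R :=
  ereal_sup [set (dotv xi x - Lambda_mu xi)%:E | xi in V].

Lemma cube_inte_EFin n (f : ('I_n -> R) -> \bar R) (g : ('I_n -> R) -> R) :
  (forall b, f (cube_pt b) = (g (cube_pt b))%:E) -> cube_inte f = (cube_int g)%:E.
Proof.
by move=> fg; rewrite /cube_inte (eq_bigr _ (fun b _ => fg b)) sumEFin -EFinM.
Qed.

Lemma cube_int_expR_gt0 n (g : ('I_n -> R) -> R) :
  (0 < cube_int (fun x => expR (g x)))%R.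
Proof.
rewrite /cube_int mulr_gt0 ?invr_gt0 ?exprn_gt0 //.
rewrite (bigD1 [ffun=> true]) //= ltr_wpDr ?expR_gt0 //.
by rewrite sumr_ge0 // => b _; apply: expR_ge0.
Qed.

Lemma lhs_P24_set0 n : lhs_P24 (set0 : set ('I_n -> R)) = -oo.
Proof.
rewrite /lhs_P24 /cube_inte big1 ?mule0 ?le0_lneNy // => b _.
by rewrite image_set0 ereal_sup0.
Qed.

Lemma support_fun_gtNy n (V : set ('I_n -> R)) x : V !=set0 -> -oo < support_fun V x.
Proof. by case=> xi Vxi; apply: lt_le_trans (ltNyr _) (ereal_sup_ubound _); exists xi. Qed.

Lemma rad_width_pinfty n (V : set ('I_n -> R)) : V !=set0 ->
  (exists b, support_fun V (cube_pt b) = +oo) -> rad_width V = +oo.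
Proof.
move=> V0 [b supb]; rewrite /rad_width /cube_inte.
have -> : \sum_b' support_fun V (cube_pt b') = +oo.
  apply/eqP; rewrite esum_eqy => [|b' _]; first by apply/existsP; exists b; rewrite supb.
  by rewrite gt_eqF // support_fun_gtNy.
by rewrite gt0_muley // lte_fin invr_gt0 exprn_gt0.
Qed.

Lemma legendre_on_le n (V : set ('I_n -> R)) (S : cube n -> R) u b :
  (forall i, -1 <= u i <= 1)%R -> (forall xi c, V xi -> dotv xi (cube_pt c) <= S c)%R ->
  legendre_on V (cube_pt b) <= (2 * \sum_c cube_kernel u b c * S c + cube_relent u)%:E.
Proof.
move=> u_itv S_ge; apply: ge_ereal_sup => _ [xi Vxi <-].
by rewrite lee_fin; apply: dotv_sub_Lambda_mu_le => // c; apply: S_ge.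
Qed.

Lemma lhs_P24_le_fin n (V : set ('I_n -> R)) : V !=set0 ->
  (forall b, support_fun V (cube_pt b) < +oo) -> lhs_P24 V <= 2%:E * rad_width V.
Proof.
move=> [xi0 Vxi0] sup_lty.
pose S x := fine (support_fun V x); pose f x := fine (legendre_on V x).
have SE b : support_fun V (cube_pt b) = (S (cube_pt b))%:E.
  by rewrite fineK // fin_real // sup_lty support_fun_gtNy //; exists xi0.
have S_ge xi c : V xi -> (dotv xi (cube_pt c) <= S (cube_pt c))%R.
  by move=> Vxi; rewrite -lee_fin -SE; apply: ereal_sup_ubound; exists xi.
have fE b : legendre_on V (cube_pt b) = (f (cube_pt b))%:E.
  have u0_itv : forall i : 'I_n, (-1 <= (0 : R) <= 1)%R by move=> _; lra.
  rewrite fineK // fin_real //; apply/andP; split.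
    by apply: lt_le_trans (ltNyr _) (ereal_sup_ubound _); exists xi0.
  by apply: le_lt_trans (legendre_on_le _ u0_itv S_ge) (ltry _).
rewrite /rad_width (cube_inte_EFin SE) /lhs_P24.
rewrite (cube_inte_EFin (g := fun x => expR (f x))) => [|b]; last first.
  by rewrite -/(legendre_on V (cube_pt b)) fE.
rewrite lne_EFin ?cube_int_expR_gt0 // -EFinM lee_fin -ler_expR.
rewrite lnK ?posrE ?cube_int_expR_gt0 //.
have two_gt0 : (0 < 2 ^+ n :> R)%R by rewrite exprn_gt0.
rewrite /cube_int -(ler_pM2l two_gt0) mulrA divff ?gt_eqF // mul1r.
apply: (cube_expR_le (f := fun b => f (cube_pt b))) => b u u_itv.
by rewrite -lee_fin -fE; apply: legendre_on_le.
Qed.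

End Width.

Theorem proposition2p4 (R : realType) :
  exists kappa : R, 0 < kappa /\
    forall (n : nat) (V : set ('I_n -> R)),
      (lhs_P24 V <= kappa%:E * rad_width V)%E.
Proof.
exists 2; split => // n V.
have [->|V0] := eqVneq V set0; first by rewrite lhs_P24_set0 leNye.
have {}V0 : V !=set0 by apply/set0P.
have [sup_y|sup_lty] := pselect (exists b, support_fun V (cube_pt b) = +oo%E).
  by rewrite rad_width_pinfty // gt0_muley ?leey.
apply: lhs_P24_le_fin => // b; rewrite ltey; apply/eqP => sup_y.
by apply: sup_lty; exists b.
Qed.
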